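(* Let $(X,d)$ be a compact metric space and $f\colon X\to X$ a continuous map that is c-expansive or equicontinuous. If $f$ has the shadowing property, then $f$ has the limit shadowing property.
   Context: For a continuous surjection $f$, let $X_f=\{(x_i)_{i\in\mathbb{Z}}\in X^{\mathbb{Z}}: f(x_i)=x_{i+1}\ \forall i\}$; $f$ is c-expansive if there is $e>0$ such that for $(x_i),(y_i)\in X_f$, $d(x_i,y_i)\le e$ for all $i\in\mathbb{Z}$ implies $(x_i)=(y_i)$. $f$ is equicontinuous if for every $\epsilon>0$ there is $\delta>0$ such that $d(x,y)\le\delta$ implies $\sup_{n\ge0}d(f^n(x),f^n(y))\le\epsilon$. Shadowing property: for every $\epsilon>0$ there is $\delta>0$ such that every sequence $(x_i)_{i\ge0}$ with $d(f(x_i),x_{i+1})\le\delta$ for all $i$ admits $x\in X$ with $d(x_i,f^i(x))\le\epsilon$ for all $i$. Limit shadowing property: every sequence $(x_i)_{i\ge0}$ with $\lim_i d(f(x_i),x_{i+1})=0$ admits $y\in X$ with $\lim_i d(x_i,f^i(y))=0$. *)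

From Stdlib Require Import Reals List ZArith.
Open Scope R_scope.

Definition is_metric {X : Type} (d : X -> X -> R) : Prop :=
  (forall x y, 0 <= d x y) /\
  (forall x y, d x y = 0 <-> x = y) /\
  (forall x y, d x y = d y x) /\
  (forall x y z, d x z <= d x y + d y z).

Definition is_open {X : Type} (d : X -> X -> R) (U : X -> Prop) : Prop :=
  forall x, U x -> exists r, 0 < r /\ forall y, d x y < r -> U y.

Definition is_compact {X : Type} (d : X -> X -> R) : Prop :=
  forall (I : Type) (U : I -> X -> Prop),
    (forall i, is_open d (U i)) ->
    (forall x, exists i, U i x) ->
    exists l : list I, forall x, exists i, In i l /\ U i x.

Definition is_continuous {X : Type} (d : X -> X -> R) (f : X -> X) : Prop :=
  forall x eps, 0 < eps ->
    exists delta, 0 < delta /\ forall y, d x y < delta -> d (f x) (f y) < eps.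

Definition in_Xf {X : Type} (f : X -> X) (x : Z -> X) : Prop :=
  forall i : Z, f (x i) = x (i + 1)%Z.

Definition c_expansive {X : Type} (d : X -> X -> R) (f : X -> X) : Prop :=
  exists e, 0 < e /\
    forall x y : Z -> X, in_Xf f x -> in_Xf f y ->
      (forall i : Z, d (x i) (y i) <= e) -> x = y.

(* sup_{n>=0} d(f^n x, f^n y) <= eps, written pointwise. *)
Definition equicontinuous {X : Type} (d : X -> X -> R) (f : X -> X) : Prop :=
  forall eps, 0 < eps -> exists delta, 0 < delta /\
    forall x y, d x y <= delta ->
      forall n : nat, d (Nat.iter n f x) (Nat.iter n f y) <= eps.

Definition shadowing {X : Type} (d : X -> X -> R) (f : X -> X) : Prop :=
  forall eps, 0 < eps -> exists delta, 0 < delta /\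
    forall xs : nat -> X, (forall i, d (f (xs i)) (xs (S i)) <= delta) ->
      exists x, forall i, d (xs i) (Nat.iter i f x) <= eps.

Definition limit_shadowing {X : Type} (d : X -> X -> R) (f : X -> X) : Prop :=
  forall xs : nat -> X, Un_cv (fun i => d (f (xs i)) (xs (S i))) 0 ->
    exists y, Un_cv (fun i => d (xs i) (Nat.iter i f y)) 0.

(* Shadowing alone gives, for every eps, a point whose orbit eps-shadows the TAIL of an
   asymptotic pseudo-orbit (a loop near a cluster point is prepended to make it a pseudo-orbit
   from time 0). It remains to get one point working for all eps. Under equicontinuity, a
   cluster point of such points does. Under c-expansivity, any two points e/2-shadowing the
   tail have eventually e-close orbits, and these are forward asymptotic: otherwise a diagonal
   extraction of backward limits produces two distinct e-close bi-infinite orbits. *)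

From Stdlib Require Import Reals List ZArith Lra Lia Classical IndefiniteDescription.
Open Scope R_scope.

Lemma dependent_choice {T : Type} (Rel : nat -> T -> T -> Prop) (t0 : T) :
  (forall j t, exists t', Rel j t t') ->
  exists s : nat -> T, s 0%nat = t0 /\ forall j, Rel j (s j) (s (S j)).
Proof.
  intros H. destruct (functional_choice (fun p : nat * T => Rel (fst p) (snd p))) as [next Hnext].
  { intros [j t]. exact (H j t). }
  exists (fix s n := match n with O => t0 | S n => next (n, s n) end).
  split; [reflexivity|]. intro j. exact (Hnext (j, _)).
Qed.

Definition biorbit {X : Type} (f : X -> X) (u : nat -> X) : Z -> X :=
  fun z => if (0 <=? z)%Z then Nat.iter (Z.to_nat z) f (u 0%nat) else u (Z.to_nat (- z)).

Lemma in_Xf_biorbit {X : Type} (f : X -> X) (u : nat -> X) :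
  (forall j, f (u (S j)) = u j) -> in_Xf f (biorbit f u).
Proof.
  intros hu i. unfold biorbit. destruct (Z.leb_spec 0 i) as [Hi|Hi].
  - rewrite (proj2 (Z.leb_le 0 (i + 1))) by lia.
    replace (Z.to_nat (i + 1)) with (S (Z.to_nat i)) by lia. reflexivity.
  - destruct (Z.eq_dec i (-1)) as [->|Hne]; [apply hu|].
    rewrite (proj2 (Z.leb_gt 0 (i + 1))) by lia.
    replace (Z.to_nat (- i)) with (S (Z.to_nat (- (i + 1)))) by lia. apply hu.
Qed.

Lemma succ_mod_cases (q P : nat) : (0 < P)%nat ->
  (S q mod P = S (q mod P))%nat \/ (S q mod P = 0 /\ S (q mod P) = P)%nat.
Proof.
  intros HP. pose proof (Nat.div_mod_eq q P) as Hq.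
  pose proof (Nat.mod_upper_bound q P ltac:(lia)).
  destruct (Nat.lt_ge_cases (S (q mod P)) P) as [Hl|Hl].
  - left. symmetry. apply (Nat.mod_unique _ _ (q / P)); lia.
  - right. split; [|lia]. symmetry. apply (Nat.mod_unique _ _ (S (q / P))); [lia|].
    rewrite Nat.mul_succ_r. lia.
Qed.

(* Up to time [b] the index runs through the loop [a+1, ..., b], arriving at [b] exactly
   at time [b]; afterwards it is the identity. *)
Lemma loop_reindex (a b : nat) : (a < b)%nat ->
  exists r : nat -> nat,
    (forall i, a < r i)%nat /\ (forall i, b < i -> r i = i)%nat /\
    (forall i, r (S i) = S (r i) \/ (r i = b /\ r (S i) = S a))%nat.
Proof.
  intros Hab. set (P := (b - a)%nat).
  exists (fun i => if (i <=? b)%nat then (b - (b - i) mod P)%nat else i).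
  split; [|split].
  - intro i. destruct (Nat.leb_spec i b); [|lia].
    pose proof (Nat.mod_upper_bound (b - i) P ltac:(unfold P; lia)). unfold P in *. lia.
  - intros i Hi. destruct (Nat.leb_spec i b); lia.
  - intro i. destruct (Nat.lt_trichotomy i b) as [Hi|[->|Hi]].
    + rewrite (proj2 (Nat.leb_le i b)), (proj2 (Nat.leb_le (S i) b)) by lia.
      replace (b - i)%nat with (S (b - S i)) by lia.
      pose proof (Nat.mod_upper_bound (S (b - S i)) P ltac:(unfold P; lia)).
      destruct (succ_mod_cases (b - S i) P ltac:(unfold P; lia)) as [Hm|[H1 H2]].
      * left. rewrite Hm in *. lia.
      * right. rewrite H1. unfold P in *. lia.
    + left. rewrite Nat.leb_refl, (proj2 (Nat.leb_gt (S b) b)) by lia.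
      rewrite Nat.sub_diag, Nat.Div0.mod_0_l. lia.
    + left. rewrite !(proj2 (Nat.leb_gt _ b)) by lia. reflexivity.
Qed.

Lemma Un_cv_0_nonneg (u : nat -> R) : (forall n, 0 <= u n) ->
  Un_cv u 0 <-> forall eps, 0 < eps -> exists N, forall n, (N <= n)%nat -> u n < eps.
Proof.
  intros hu. unfold Un_cv, R_dist.
  split; intros H eps Heps; destruct (H eps Heps) as [N HN]; exists N; intros n Hn;
    specialize (HN n Hn); rewrite Rminus_0_r, Rabs_pos_eq in * by apply hu; exact HN.
Qed.

Lemma inv_INR_S_pos (k : nat) : 0 < / INR (S k).
Proof. apply Rinv_0_lt_compat, lt_0_INR; lia. Qed.

Lemma inv_INR_S_eventually_lt (eps : R) : 0 < eps ->
  exists N, forall k, (N <= k)%nat -> / INR (S k) < eps.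
Proof.
  intros Heps. destruct (archimed_cor1 eps Heps) as [N [HN HN0]].
  exists N. intros k Hk. apply Rle_lt_trans with (/ INR N); [|exact HN].
  apply Rinv_le_contravar; [apply lt_0_INR; exact HN0|]. apply le_INR; lia.
Qed.

(* Reindexings need not be monotone: [k <= sg k] is all that limits along them require. *)
Definition subseq_index (sg : nat -> nat) : Prop := forall k, (k <= sg k)%nat.

Lemma subseq_index_comp (sg sg' : nat -> nat) :
  subseq_index sg -> subseq_index sg' -> subseq_index (fun k => sg (sg' k)).
Proof. intros h h' k. specialize (h (sg' k)). specialize (h' k). lia. Qed.

Section Metric.

Context {X : Type} (d : X -> X -> R) (hd : is_metric d).

Lemma dist_nonneg x y : 0 <= d x y.
Proof. apply hd. Qed.

Lemma dist_refl x : d x x = 0.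
Proof. apply hd; reflexivity. Qed.

Lemma dist_eq0 x y : d x y = 0 -> x = y.
Proof. apply hd. Qed.

Lemma dist_sym x y : d x y = d y x.
Proof. apply hd. Qed.

Lemma dist_tri x y z : d x z <= d x y + d y z.
Proof. apply hd. Qed.

Definition conv (s : nat -> X) (c : X) : Prop :=
  forall eta, 0 < eta -> exists N, forall k, (N <= k)%nat -> d (s k) c < eta.

Lemma conv_subseq s c sg : subseq_index sg -> conv s c -> conv (fun k => s (sg k)) c.
Proof.
  intros hsg hs eta He. destruct (hs eta He) as [N HN]. exists N. intros k Hk.
  apply HN. specialize (hsg k). lia.
Qed.

Lemma conv_eventually_eq s t c N :
  (forall k, (N <= k)%nat -> s k = t k) -> conv s c -> conv t c.
Proof.
  intros He hs eta Heta. destruct (hs eta Heta) as [N1 H1]. exists (N + N1)%nat.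
  intros k Hk. rewrite <- He by lia. apply H1. lia.
Qed.

Lemma conv_continuous g s c : is_continuous d g -> conv s c -> conv (fun k => g (s k)) (g c).
Proof.
  intros hg hs eta He. destruct (hg c eta He) as [de [Hde H]].
  destruct (hs de Hde) as [N HN]. exists N. intros k Hk.
  rewrite dist_sym. apply H. rewrite dist_sym. apply HN, Hk.
Qed.

Lemma conv_dist_le s t c c' e N0 : conv s c -> conv t c' ->
  (forall k, (N0 <= k)%nat -> d (s k) (t k) <= e) -> d c c' <= e.
Proof.
  intros hs ht H. apply Rnot_lt_le. intro Hlt.
  set (eta := (d c c' - e) / 2).
  assert (He : 0 < eta) by (unfold eta; lra).
  destruct (hs eta He) as [N1 H1]. destruct (ht eta He) as [N2 H2].
  set (k := (N0 + N1 + N2)%nat).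
  specialize (H k ltac:(unfold k; lia)). specialize (H1 k ltac:(unfold k; lia)).
  specialize (H2 k ltac:(unfold k; lia)).
  pose proof (dist_tri c (s k) c'). pose proof (dist_tri (s k) (t k) c').
  rewrite (dist_sym c (s k)) in *. unfold eta in *. lra.
Qed.

Lemma conv_dist_ge s t c c' e N0 : conv s c -> conv t c' ->
  (forall k, (N0 <= k)%nat -> e <= d (s k) (t k)) -> e <= d c c'.
Proof.
  intros hs ht H. apply Rnot_lt_le. intro Hlt.
  set (eta := (e - d c c') / 2).
  assert (He : 0 < eta) by (unfold eta; lra).
  destruct (hs eta He) as [N1 H1]. destruct (ht eta He) as [N2 H2].
  set (k := (N0 + N1 + N2)%nat).
  specialize (H k ltac:(unfold k; lia)). specialize (H1 k ltac:(unfold k; lia)).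
  specialize (H2 k ltac:(unfold k; lia)).
  pose proof (dist_tri (s k) c (t k)). pose proof (dist_tri c c' (t k)).
  rewrite (dist_sym c' (t k)) in *. unfold eta in *. lra.
Qed.

Lemma conv_unique s c c' : conv s c -> conv s c' -> c = c'.
Proof.
  intros h h'. apply dist_eq0, Rle_antisym; [|apply dist_nonneg].
  apply (conv_dist_le s s c c' 0 0 h h'). intros k _. rewrite dist_refl; lra.
Qed.

Lemma iter_continuous (f : X -> X) n : is_continuous d f -> is_continuous d (Nat.iter n f).
Proof.
  intros hf. induction n as [|n IH]; intros x eps He.
  - exists eps. split; auto.
  - destruct (hf (Nat.iter n f x) eps He) as [d1 [Hd1 H1]].
    destruct (IH x d1 Hd1) as [d2 [Hd2 H2]].
    exists d2. split; auto. intros y Hy. apply H1, H2, Hy.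
Qed.

Section Compact.

Hypothesis hX : is_compact d.

(* Otherwise the balls that the sequence eventually avoids would form an open cover
   without finite subcover. *)
Lemma compact_cluster_point (u : nat -> X) :
  exists c, forall eta, 0 < eta -> forall N, exists m, (N <= m)%nat /\ d (u m) c < eta.
Proof.
  apply NNPP; intro Hn.
  assert (Havoid : forall c, exists eta N, 0 < eta /\ forall m, (N <= m)%nat -> eta <= d (u m) c).
  { intro c. apply NNPP; intro H1. apply Hn. exists c. intros eta Heta N.
    apply NNPP; intro H2. apply H1. exists eta, N. split; auto. intros m Hm.
    apply Rnot_lt_le. intro H3. apply H2. exists m; auto. }
  set (U := fun '(c, eta, N) (x : X) =>
     d c x < eta /\ 0 < eta /\ forall m, (N <= m)%nat -> eta <= d (u m) c).
  destruct (hX _ U) as [l Hl].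
  - intros [[c eta] N] x [H1 [H2 H3]]. exists (eta - d c x). split; [lra|].
    intros y Hy. split; [|split; auto]. pose proof (dist_tri c x y). lra.
  - intro x. destruct (Havoid x) as [eta [N [He HN]]]. exists (x, eta, N).
    simpl. rewrite dist_refl. auto.
  - set (Nm := list_max (map snd l)).
    assert (HNm : forall i, In i l -> (snd i <= Nm)%nat).
    { intros i Hi. apply (proj1 (Forall_forall _ _) (proj1 (list_max_le _ Nm) (le_n Nm))).
      apply in_map, Hi. }
    destruct (Hl (u Nm)) as [[[c eta] N] [Hin [H1 [_ H3]]]].
    specialize (H3 Nm (HNm _ Hin)). rewrite dist_sym in H3. lra.
Qed.

Lemma compact_conv_subseq (u : nat -> X) :
  exists c sg, subseq_index sg /\ conv (fun k => u (sg k)) c.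
Proof.
  destruct (compact_cluster_point u) as [c Hc].
  destruct (functional_choice (fun k m => (k <= m)%nat /\ d (u m) c < / INR (S k)))
    as [sg Hsg].
  { intro k. apply (Hc _ (inv_INR_S_pos k) k). }
  exists c, sg. split; [intro k; apply Hsg|].
  intros eta He. destruct (inv_INR_S_eventually_lt eta He) as [N HN]. exists N.
  intros k Hk. specialize (Hsg k). specialize (HN k Hk). lra.
Qed.

Lemma compact_conv_subseq2 (u v : nat -> X) :
  exists c c' sg, subseq_index sg /\ conv (fun k => u (sg k)) c /\ conv (fun k => v (sg k)) c'.
Proof.
  destruct (compact_conv_subseq u) as [c [sg1 [Hsg1 Hu]]].
  destruct (compact_conv_subseq (fun k => v (sg1 k))) as [c' [sg2 [Hsg2 Hv]]].
  exists c, c', (fun k => sg1 (sg2 k)). split; [apply subseq_index_comp; auto|].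
  split; [apply (conv_subseq _ _ sg2 Hsg2 Hu)|exact Hv].
Qed.

Section Dynamics.

Context (f : X -> X) (hf : is_continuous d f).

(* Between two visits [a < b] of the tail of [xs] near a cluster point, loop through
   [xs (a+1) .. xs b] until time [b] and follow [xs] afterwards: the jump back from [xs b]
   to [xs (a+1)] is small by continuity of [f], so this is a pseudo-orbit from time 0 on. *)
Lemma shadowing_eventually (hsh : shadowing d f) (xs : nat -> X) :
  Un_cv (fun i => d (f (xs i)) (xs (S i))) 0 ->
  forall eps, 0 < eps -> exists z K, forall i, (K <= i)%nat -> d (xs i) (Nat.iter i f z) <= eps.
Proof.
  intros Hxs eps He. destruct (hsh eps He) as [del [Hdel Hsh]].
  destruct (proj1 (Un_cv_0_nonneg _ (fun i => dist_nonneg _ _)) Hxs (del / 2)) as [M HM];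
    [lra|].
  destruct (compact_cluster_point xs) as [c Hc].
  destruct (hf c (del / 4)) as [g [Hg Hfc]]; [lra|].
  destruct (Hc g Hg M) as [a [Ha Hac]].
  destruct (Hc g Hg (S a)) as [b [Hb Hbc]].
  destruct (loop_reindex a b Hb) as [r [Hra [Hrb Hrs]]].
  destruct (Hsh (fun i => xs (r i))) as [z Hz].
  - intro i. destruct (Hrs i) as [H1|[H1 H2]]; [rewrite H1|rewrite H1, H2].
    + specialize (HM (r i) ltac:(specialize (Hra i); lia)). lra.
    + assert (Hfa : d (f c) (f (xs a)) < del / 4) by (apply Hfc; rewrite dist_sym; auto).
      assert (Hfb : d (f c) (f (xs b)) < del / 4) by (apply Hfc; rewrite dist_sym; auto).
      specialize (HM a Ha).
      pose proof (dist_tri (f (xs b)) (f c) (xs (S a))).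
      pose proof (dist_tri (f c) (f (xs a)) (xs (S a))).
      rewrite (dist_sym (f (xs b)) (f c)) in *. lra.
  - exists z, (S b). intros i Hi. specialize (Hz i). rewrite (Hrb i) in Hz by lia. exact Hz.
Qed.

Lemma conv_backward_step (a : X) (phi sg : nat -> nat) j c c' :
  subseq_index phi -> subseq_index sg ->
  conv (fun k => Nat.iter (phi k - j) f a) c ->
  conv (fun k => Nat.iter (phi (sg k) - S j) f a) c' -> f c' = c.
Proof.
  intros hphi hsg hc hc'. apply (conv_unique _ _ _ (conv_continuous f _ _ hf hc')).
  apply (conv_eventually_eq (fun k => Nat.iter (phi (sg k) - j) f a) _ _ (S j)).
  - intros k Hk. specialize (hphi (sg k)). specialize (hsg k).
    replace (phi (sg k) - j)%nat with (S (phi (sg k) - S j)) by lia. reflexivity.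
  - exact (conv_subseq _ _ sg hsg hc).
Qed.

(* A diagonal extraction along nested reindexings [sel j]: the limits at depth [j]
   are limits of [f^(ns k - j)], hence preimages under [f] of those at depth [j - 1]. *)
Lemma backward_limits (a b : X) (ns : nat -> nat) :
  subseq_index ns ->
  exists u v : nat -> X,
    (forall j, f (u (S j)) = u j /\ f (v (S j)) = v j) /\
    forall j, exists sel, subseq_index sel /\
      conv (fun k => Nat.iter (ns (sel k) - j) f a) (u j) /\
      conv (fun k => Nat.iter (ns (sel k) - j) f b) (v j).
Proof.
  intros hns.
  set (refines := fun j (t t' : (nat -> nat) * (X * X)) =>
    exists sg, subseq_index sg /\ fst t' = (fun k => fst t (sg k)) /\
      conv (fun k => Nat.iter (ns (fst t' k) - j) f a) (fst (snd t')) /\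
      conv (fun k => Nat.iter (ns (fst t' k) - j) f b) (snd (snd t'))).
  destruct (dependent_choice refines (fun k => k, (a, a))) as [s [Hs0 Hs]].
  { intros j [sel p].
    destruct (compact_conv_subseq2 (fun k => Nat.iter (ns (sel k) - j) f a)
                (fun k => Nat.iter (ns (sel k) - j) f b)) as [c [c' [sg [Hsg [Hc Hc']]]]].
    exists (fun k => sel (sg k), (c, c')). exists sg. auto. }
  assert (Hsel : forall j, subseq_index (fst (s j))).
  { induction j as [|j IH]; [rewrite Hs0; intro k; apply le_n|].
    destruct (Hs j) as [sg [Hsg [-> _]]]. apply subseq_index_comp; auto. }
  assert (Hphi : forall j, subseq_index (fun k => ns (fst (s j) k))).
  { intro j. apply subseq_index_comp; auto. }
  exists (fun j => fst (snd (s (S j)))), (fun j => snd (snd (s (S j)))).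
  split.
  - intro j. destruct (Hs j) as [_ [_ [_ [Hu Hv]]]].
    destruct (Hs (S j)) as [sg [Hsg [Hsel' [Hu' Hv']]]]. rewrite Hsel' in Hu', Hv'.
    split; [exact (conv_backward_step a _ sg j _ _ (Hphi (S j)) Hsg Hu Hu')
           |exact (conv_backward_step b _ sg j _ _ (Hphi (S j)) Hsg Hv Hv')].
  - intro j. exists (fst (s (S j))). split; [apply Hsel|].
    destruct (Hs j) as [_ [_ [_ H]]]. exact H.
Qed.

(* Otherwise limits of the pair along times [n] with distance [>= tau], pulled back by
   [backward_limits], give two distinct bi-infinite orbits that stay [e]-close. *)
Lemma c_expansive_asymptotic (e : R)
  (hexp : forall x y : Z -> X, in_Xf f x -> in_Xf f y ->
     (forall i : Z, d (x i) (y i) <= e) -> x = y)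
  (a b : X) (K : nat)
  (hab : forall n, (K <= n)%nat -> d (Nat.iter n f a) (Nat.iter n f b) <= e) :
  forall tau, 0 < tau ->
    exists N, forall n, (N <= n)%nat -> d (Nat.iter n f a) (Nat.iter n f b) < tau.
Proof.
  intros tau Htau. apply NNPP. intro Hn.
  assert (Hfar : forall m, exists n, (m + K <= n)%nat /\
                   tau <= d (Nat.iter n f a) (Nat.iter n f b)).
  { intro m. apply NNPP. intro Hm. apply Hn. exists (m + K)%nat. intros n Hnm.
    apply Rnot_le_lt. intro Hle. apply Hm. exists n. auto. }
  destruct (functional_choice _ Hfar) as [ns Hns].
  assert (Hns_idx : subseq_index ns) by (intro m; specialize (Hns m); lia).
  destruct (backward_limits a b ns Hns_idx) as [u [v [Horb Hlim]]].
  assert (Hneg : forall j, d (u j) (v j) <= e).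
  { intro j. destruct (Hlim j) as [sel [Hsel [Hu Hv]]].
    apply (conv_dist_le _ _ _ _ e j Hu Hv). intros k Hk. apply hab.
    specialize (Hns (sel k)). specialize (Hsel k). lia. }
  destruct (Hlim 0%nat) as [sel [Hsel [Hu Hv]]].
  assert (Hpos : forall i, d (Nat.iter i f (u 0%nat)) (Nat.iter i f (v 0%nat)) <= e).
  { intro i.
    apply (conv_dist_le _ _ _ _ e 0 (conv_continuous _ _ _ (iter_continuous f i hf) Hu)
                                    (conv_continuous _ _ _ (iter_continuous f i hf) Hv)).
    intros k _. rewrite <- !Nat.iter_add. apply hab.
    specialize (Hns (sel k)). lia. }
  assert (Hfar0 : tau <= d (u 0%nat) (v 0%nat)).
  { apply (conv_dist_ge _ _ _ _ tau 0 Hu Hv). intros k _.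
    rewrite Nat.sub_0_r. apply Hns. }
  assert (Heq : biorbit f u = biorbit f v).
  { apply hexp; [apply in_Xf_biorbit; apply Horb..|].
    intro i. unfold biorbit. destruct (0 <=? i)%Z; [apply Hpos|apply Hneg]. }
  assert (H0 : biorbit f u 0%Z = biorbit f v 0%Z) by (rewrite Heq; reflexivity).
  cbn in H0. rewrite H0, dist_refl in Hfar0. lra.
Qed.

Lemma limit_shadowing_of_c_expansive (hsh : shadowing d f) :
  c_expansive d f -> limit_shadowing d f.
Proof.
  intros [e [He hexp]] xs Hxs.
  destruct (shadowing_eventually hsh xs Hxs (e / 2)) as [y [K0 Hy]]; [lra|].
  exists y. apply Un_cv_0_nonneg; [intro; apply dist_nonneg|]. intros tau Htau.
  destruct (shadowing_eventually hsh xs Hxs (Rmin (tau / 2) (e / 2))) as [z [K Hz]].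
  { apply Rmin_glb_lt; lra. }
  pose proof (Rmin_l (tau / 2) (e / 2)). pose proof (Rmin_r (tau / 2) (e / 2)).
  assert (Hyz : forall n, (Nat.max K0 K <= n)%nat ->
            d (Nat.iter n f z) (Nat.iter n f y) <= e).
  { intros n Hn. specialize (Hy n ltac:(lia)). specialize (Hz n ltac:(lia)).
    pose proof (dist_tri (Nat.iter n f z) (xs n) (Nat.iter n f y)).
    rewrite (dist_sym (Nat.iter n f z) (xs n)) in *. lra. }
  destruct (c_expansive_asymptotic e hexp z y _ Hyz (tau / 2)) as [N HN]; [lra|].
  exists (Nat.max N K). intros n Hn.
  specialize (HN n ltac:(lia)). specialize (Hz n ltac:(lia)).
  pose proof (dist_tri (xs n) (Nat.iter n f z) (Nat.iter n f y)). lra.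
Qed.

Lemma limit_shadowing_of_equicontinuous (hsh : shadowing d f) :
  equicontinuous d f -> limit_shadowing d f.
Proof.
  intros heq xs Hxs.
  destruct (functional_choice (fun (k : nat) (p : X * nat) =>
      forall i, (snd p <= i)%nat -> d (xs i) (Nat.iter i f (fst p)) <= / INR (S k)))
    as [Y HY].
  { intro k. destruct (shadowing_eventually hsh xs Hxs _ (inv_INR_S_pos k)) as [z [K Hz]].
    exists (z, K). exact Hz. }
  destruct (compact_cluster_point (fun k => fst (Y k))) as [c Hc].
  exists c. apply Un_cv_0_nonneg; [intro; apply dist_nonneg|]. intros tau Htau.
  destruct (heq (tau / 2)) as [eta [Heta Heq]]; [lra|].
  destruct (inv_INR_S_eventually_lt (tau / 2)) as [N HN]; [lra|].
  destruct (Hc eta Heta N) as [m [Hm Hmc]].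
  exists (snd (Y m)). intros n Hn.
  specialize (HY m n Hn). specialize (HN m Hm).
  specialize (Heq _ _ (Rlt_le _ _ Hmc) n).
  pose proof (dist_tri (xs n) (Nat.iter n f (fst (Y m))) (Nat.iter n f c)). lra.
Qed.

End Dynamics.
End Compact.
End Metric.

Theorem proposition1p1 (X : Type) (d : X -> X -> R) (f : X -> X)
  (hd : is_metric d) (hX : is_compact d) (hf : is_continuous d f)
  (hce : c_expansive d f \/ equicontinuous d f)
  (hsh : shadowing d f) :
  limit_shadowing d f.
Proof.
  destruct hce as [hexp|heq].
  - exact (limit_shadowing_of_c_expansive d hd hX f hf hsh hexp).
  - exact (limit_shadowing_of_equicontinuous d hd hX f hf hsh heq).
Qed.
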